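(* Let $K\ge 1$, $N\ge 2$, and let ${\bm{p}}\in\Delta_K$ with $p_1\ge p_2\ge\dots\ge p_K$. For ${\bm{q}}\in\Delta_K$ let $L_N({\bm{p}},{\bm{q}})=\sum_{k=1}^K p_k(1-q_k)^N$ (the expected test loss of the memorization model, where the error on component $k$ is $e_k(n_k)=\mathbf{1}_{\{n_k=0\}}$ and ${\bm{n}}\sim\mathrm{Multinomial}(N,{\bm{q}})$). Then $$L^{\mathrm{same}}({\bm{p}}):=L_N({\bm{p}},{\bm{p}})=\sum_{k=1}^K p_k(1-p_k)^N,$$ $$L^*({\bm{p}}):=\min_{{\bm{q}}\in\Delta_K}L_N({\bm{p}},{\bm{q}})=(K_N({\bm{p}})-1)\,\delta_N({\bm{p}})+\sum_{k=K_N({\bm{p}})+1}^K p_k,$$ for some $\delta_N({\bm{p}})\in\big[p_{K_N({\bm{p}})+1},\,p_{K_N({\bm{p}})}\big)$ (with the convention $p_{K+1}=0$), where $$K_N({\bm{p}}):=\max\left\{s\le K:\ \sum_{k=1}^{s-1}\left(1-(p_s/p_k)^{\frac{1}{N-1}}\right)<1\right\}.$$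
   Context: $\Delta_K=\{{\bm{r}}\in\mathbb{R}^K:{\bm{r}}\ge0,\ \sum_k r_k=1\}$. Memorization model: each of $K$ tasks is memorizing a unique atom; the test distribution is the mixture of the tasks with proportions ${\bm{p}}$, training uses $N$ i.i.d. samples from the mixture with proportions ${\bm{q}}$, and the error on task $k$ is $1$ if no training example from task $k$ was seen and $0$ otherwise. *)

From mathcomp Require Import all_boot all_order all_algebra.
From mathcomp Require Import all_classical all_reals all_analysis.
Set Implicit Arguments. Unset Strict Implicit. Unset Printing Implicit Defensive.
Import Order.TTheory GRing.Theory Num.Theory.
Local Open Scope ring_scope.

(* The probability simplex Delta_K, vectors indexed by 'I_K (index k-1). *)
Definition in_simplex (R : realType) (K : nat) (q : 'I_K -> R) : Prop :=
  (forall k, 0 <= q k) /\ \sum_(k < K) q k = 1.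

(* 1-based access p_k for k = 1..K, with the convention p_k = 0 otherwise
   (in particular p_{K+1} = 0). *)
Definition pn (R : realType) (K : nat) (p : 'I_K -> R) (k : nat) : R :=
  match k with
  | 0 => 0
  | k'.+1 => if @insub nat (fun i => (i < K)%N) 'I_K k' is Some i then p i else 0
  end.

Definition LN (R : realType) (K N : nat) (p q : 'I_K -> R) : R :=
  \sum_(k < K) p k * (1 - q k) ^+ N.

Definition KN_cond (R : realType) (K N : nat) (p : 'I_K -> R) (s : nat) : bool :=
  \sum_(1 <= k < s) (1 - powR (pn p s / pn p k) (1 / (N - 1)%:R)) < 1.

Definition KN (R : realType) (K N : nat) (p : 'I_K -> R) : nat :=
  \max_(1 <= s < K.+1 | KN_cond N p s) s.

(* L_N(p, .) is convex in q, so a point of the simplex is optimal as soon as the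
   marginal losses p_k (1 - q_k)^(N-1) equal a common level delta on its support
   and are at most delta off it.  With a_k = p_k^(1/(N-1)) and S = K_N(p), take
   q_k = 1 - c / a_k for k <= S and q_k = 0 beyond, where normalisation forces
   c = (S - 1) / sum_(k <= S) 1/a_k and delta = c^(N-1).  The defining condition
   of K_N(p), at S and at S + 1, says exactly that p_(S+1) <= delta < p_S, i.e.
   that q is a point of the simplex satisfying the optimality condition; the
   tangent-line inequality for x |-> x^N then gives the lower bound.  On the
   support p_k (1 - q_k)^N = delta (1 - q_k), which sums to (S - 1) delta. *)

From mathcomp Require Import all_boot all_order all_algebra.
From mathcomp Require Import all_classical all_reals all_analysis.
From mathcomp Require Import ring lra zify.
Import Order.TTheory GRing.Theory Num.Theory.
Local Open Scope ring_scope.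

Set Implicit Arguments.
Unset Strict Implicit.
Unset Printing Implicit Defensive.

Lemma expr_tangent_le (R : realDomainType) (n : nat) (a b : R) : 0 <= a -> 0 <= b ->
  b ^+ n.+1 + n.+1%:R * b ^+ n * (a - b) <= a ^+ n.+1.
Proof.
move=> a0 b0; elim: n => [|n IH]; first by rewrite expr0 !expr1 mulr1 mul1r; lra.
have bn0 : 0 <= b ^+ n by rewrite exprn_ge0.
move: IH; rewrite [b ^+ n.+2]exprS [b ^+ n.+1]exprS [a ^+ n.+2]exprS -[n.+2%:R]natr1.
have n0 : 0 <= n.+1%:R :> R by rewrite ler0n.
have := mulr_ge0 (mulr_ge0 n0 bn0) (sqr_ge0 (a - b)); rewrite expr2 => sq0 IH.
have := ler_wpM2l a0 IH; nra.
Qed.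

Lemma powR_div (R : realType) (x y r : R) : 0 <= x -> 0 <= y ->
  (x / y) `^ r = x `^ r / y `^ r.
Proof.
by move=> x0 y0; rewrite powRM ?invr_ge0 // -powR_inv1 // -powRrM mulN1r powRN.
Qed.

Lemma powR_invnK (R : realType) (n : nat) (x : R) : (0 < n)%N -> 0 <= x ->
  (x `^ (1 / n%:R)) ^+ n = x.
Proof.
move=> n0 x0; rewrite -powR_mulrn ?powR_ge0 // -powRrM div1r mulVf ?powRr1 //.
by rewrite pnatr_eq0 -lt0n.
Qed.

Section WaterFilling.

Variables (R : realType) (K N S : nat) (P : nat -> R).
Hypotheses (N_ge2 : (2 <= N)%N) (S_ge1 : (1 <= S)%N) (S_leK : (S <= K)%N).
Hypothesis P_ge0 : forall k, 0 <= P k.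
Hypothesis P_noninc : forall {j k}, (1 <= j <= k)%N -> P k <= P j.
Hypothesis P1_gt0 : 0 < P 1.
Hypothesis P_out : forall k, (K < k)%N -> P k = 0.

Let r : R := 1 / (N - 1)%:R.

Hypothesis cond_S : \sum_(1 <= k < S) (1 - (P S / P k) `^ r) < 1.
Hypothesis cond_S1 :
  (S < K)%N -> ~~ (\sum_(1 <= k < S.+1) (1 - (P S.+1 / P k) `^ r) < 1).

Let A k := P k `^ r.
Let T := \sum_(1 <= k < S.+1) (A k)^-1.
Let c := (S%:R - 1) / T.
Let d := c ^+ (N - 1).
Let X k := if (1 <= k <= S)%N then 1 - c / A k else 0.

Lemma root_expr x : 0 <= x -> (x `^ r) ^+ (N - 1) = x.
Proof. by apply: powR_invnK; lia. Qed.

Lemma sum_root_ratios s : (forall k, (1 <= k < s)%N -> 0 < P k) ->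
  \sum_(1 <= k < s) (1 - (P s / P k) `^ r)
  = (s - 1)%:R - A s * \sum_(1 <= k < s) (A k)^-1.
Proof.
move=> Pk_gt0; rewrite sumrB sumr_const_nat mulr_sumr; congr (_ - _).
by apply: eq_big_nat => k /Pk_gt0 Pk0; rewrite powR_div ?P_ge0 ?ltW.
Qed.

Lemma PS_gt0 : 0 < P S.
Proof.
rewrite lt_def P_ge0 andbT; apply/eqP => PS0.
have S_eq1 : S = 1%N.
  have r_neq0 : r != 0 by rewrite /r div1r invr_eq0 pnatr_eq0; lia.
  move: cond_S; rewrite (eq_big_nat _ _ (F2 := fun=> 1)); last first.
    by move=> k _; rewrite PS0 mul0r powR0 // subr0.
  by rewrite sumr_const_nat ltrn1; lia.
by move: P1_gt0; rewrite -S_eq1 PS0 ltxx.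
Qed.

Lemma P_gt0 k : (1 <= k <= S)%N -> 0 < P k.
Proof. by move=> kS; apply: lt_le_trans PS_gt0 (P_noninc kS). Qed.

Lemma A_gt0 k : (1 <= k <= S)%N -> 0 < A k.
Proof. by move=> kS; apply/powR_gt0/P_gt0. Qed.

Lemma T_gt0 : 0 < T.
Proof.
rewrite /T big_nat_recr //= ltr_pwDr ?invr_gt0 ?A_gt0 ?S_ge1 ?leqnn //.
by apply: sumr_ge0 => k _; rewrite invr_ge0 powR_ge0.
Qed.

Lemma c_ge0 : 0 <= c.
Proof. by rewrite divr_ge0 ?(ltW T_gt0) // subr_ge0 ler1n. Qed.

Lemma c_lt_AS : c < A S.
Proof.
have := cond_S; rewrite sum_root_ratios; last first.
  by move=> k /andP[k1 /ltnW kS]; apply: P_gt0; rewrite k1.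
rewrite /c ltr_pdivrMr ?T_gt0 // /T big_nat_recr //= mulrDr.
rewrite divff ?gt_eqF ?A_gt0 ?S_ge1 ?leqnn //.
rewrite natrB //; lra.
Qed.

Lemma AS1_le_c : (S < K)%N -> A S.+1 <= c.
Proof.
move=> SK; have := cond_S1 SK; rewrite -leNgt sum_root_ratios; last first.
  by move=> k /andP[k1 kS]; apply: P_gt0; rewrite k1.
by rewrite /c ler_pdivlMr ?T_gt0 // subSS subn0 -/T; lra.
Qed.

Lemma d_lt_PS : d < P S.
Proof.
rewrite -(root_expr (P_ge0 S)) ltrXn2r ?c_ge0 ?powR_ge0 ?c_lt_AS //.
by rewrite subn_eq0 -ltnNge.
Qed.

Lemma PS1_le_d : P S.+1 <= d.
Proof.
have [SK|KS] := ltnP S K; last by rewrite P_out ?exprn_ge0 ?c_ge0.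
by rewrite -(root_expr (P_ge0 S.+1)) lerXn2r ?nnegrE ?powR_ge0 ?c_ge0 ?AS1_le_c.
Qed.

Lemma sum_split_S (F : nat -> R) : \sum_(1 <= k < K.+1) F k =
  \sum_(1 <= k < S.+1) F k + \sum_(S.+1 <= k < K.+1) F k.
Proof. by rewrite (big_cat_nat _ (n := S.+1)). Qed.

Lemma X_out k : (S < k)%N -> X k = 0.
Proof. by move=> Sk; rewrite /X ifN //; lia. Qed.

Lemma X_bounds k : 0 <= X k <= 1.
Proof.
rewrite /X; case: ifP => kS; last by rewrite lexx ler01.
have Ak_gt0 := A_gt0 kS.
have c_le_Ak : c <= A k.
  apply: ltW; apply: lt_le_trans c_lt_AS _.
  by apply: ge0_ler_powR; rewrite ?nnegrE ?P_ge0 ?P_noninc // /r divr_ge0 ?ler0n.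
have q_ge0 : 0 <= c / A k by rewrite divr_ge0 ?c_ge0 ?ltW.
have q_le1 : c / A k <= 1 by rewrite ler_pdivrMr // mul1r.
apply/andP; split; lra.
Qed.

Lemma X_sum_upto_S : \sum_(1 <= k < S.+1) X k = 1.
Proof.
rewrite (eq_big_nat _ _ (F2 := fun k => 1 - c * (A k)^-1)); last first.
  by move=> k; rewrite ltnS /X => ->.
rewrite sumrB sumr_const_nat -mulr_sumr -/T /c divfK ?gt_eqF ?T_gt0 // subSS subn0.
by rewrite subKr.
Qed.

Lemma X_sum : \sum_(1 <= k < K.+1) X k = 1.
Proof.
rewrite sum_split_S X_sum_upto_S big_nat_cond big1 ?addr0 // => k /andP[/andP[Sk _] _].
exact: X_out.
Qed.

Lemma marginal_X k : (1 <= k <= S)%N -> P k * (1 - X k) ^+ (N - 1) = d.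
Proof.
move=> kS; rewrite /X kS subKr expr_div_n root_expr ?P_ge0 //.
by rewrite mulrC divfK // gt_eqF // P_gt0.
Qed.

Lemma loss_X : \sum_(1 <= k < K.+1) P k * (1 - X k) ^+ N
  = (S%:R - 1) * d + \sum_(S.+1 <= k < K.+1) P k.
Proof.
have N_eq : N = (N - 1).+1 by lia.
rewrite sum_split_S (eq_big_nat _ _ (F2 := fun k => d * (1 - X k))); last first.
  by move=> k; rewrite ltnS => kS; rewrite N_eq exprSr mulrA marginal_X // mulrC.
rewrite -mulr_sumr sumrB X_sum_upto_S sumr_const_nat subSS subn0 mulrC.
congr (_ + _); apply: eq_big_nat => k /andP[Sk _].
by rewrite X_out // subr0 expr1n mulr1.
Qed.

Lemma loss_term_ge k q : (1 <= k <= K)%N -> 0 <= q <= 1 ->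
  P k * (1 - X k) ^+ N + N%:R * d * (X k - q) <= P k * (1 - q) ^+ N.
Proof.
move=> /andP[k1 kK] /andP[q0 q1].
have N_eq : N = (N - 1).+1 by lia.
have /andP[X0 X1] := X_bounds k.
have := @expr_tangent_le _ (N - 1) (1 - q) (1 - X k).
rewrite -N_eq subr_ge0 q1 subr_ge0 X1.
move=> /(_ isT isT) /(ler_wpM2l (P_ge0 k)); rewrite mulrDr.
have -> : P k * (N%:R * (1 - X k) ^+ (N - 1) * (1 - q - (1 - X k)))
  = N%:R * (P k * (1 - X k) ^+ (N - 1)) * (X k - q) by ring.
suff : N%:R * d * (X k - q) <= N%:R * (P k * (1 - X k) ^+ (N - 1)) * (X k - q) by lra.
have [kS|Sk] := leqP k S; first by rewrite marginal_X ?k1.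
rewrite X_out // subr0 expr1n mulr1 sub0r; apply: ler_wnM2r; first by rewrite oppr_le0.
by rewrite ler_wpM2l ?ler0n // (le_trans _ PS1_le_d) // P_noninc.
Qed.

Lemma loss_X_le (Q : nat -> R) :
  (forall k, (1 <= k <= K)%N -> 0 <= Q k <= 1) -> \sum_(1 <= k < K.+1) Q k = 1 ->
  \sum_(1 <= k < K.+1) P k * (1 - X k) ^+ N
  <= \sum_(1 <= k < K.+1) P k * (1 - Q k) ^+ N.
Proof.
move=> Q01 Q_sum.
have term_ge k : (1 <= k < K.+1)%N -> P k * (1 - X k) ^+ N + N%:R * d * (X k - Q k)
    <= P k * (1 - Q k) ^+ N.
  by move=> kK; apply: loss_term_ge; rewrite // Q01.
apply: le_trans (ler_sum_nat term_ge).
by rewrite big_split /= -mulr_sumr sumrB X_sum Q_sum subrr mulr0 addr0.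
Qed.

Lemma water_filling : exists delta, P S.+1 <= delta /\ delta < P S /\
  exists Y : nat -> R,
    [/\ forall k, 0 <= Y k, \sum_(1 <= k < K.+1) Y k = 1,
        \sum_(1 <= k < K.+1) P k * (1 - Y k) ^+ N
          = (S%:R - 1) * delta + \sum_(S.+1 <= k < K.+1) P k &
        forall Q : nat -> R, (forall k, (1 <= k <= K)%N -> 0 <= Q k <= 1) ->
          \sum_(1 <= k < K.+1) Q k = 1 ->
          \sum_(1 <= k < K.+1) P k * (1 - Y k) ^+ N
            <= \sum_(1 <= k < K.+1) P k * (1 - Q k) ^+ N].
Proof.
exists d; split; first exact: PS1_le_d.
split; first exact: d_lt_PS.
exists X; split; [by move=> k; case/andP: (X_bounds k) | exact: X_sum | exact: loss_X |].
exact: loss_X_le.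
Qed.

End WaterFilling.

Section PaddedIndexing.

Variables (R : realType) (K : nat).

Lemma pn_ord (f : 'I_K -> R) (i : 'I_K) : pn f i.+1 = f i.
Proof. by rewrite /= insubT //= => iK; congr f; apply: val_inj. Qed.

Lemma pn_out (f : 'I_K -> R) k : (K < k)%N -> pn f k = 0.
Proof. by case: k => //= k Kk; rewrite insubN // -ltnNge. Qed.

Lemma pn_ge0 (f : 'I_K -> R) : (forall i, 0 <= f i) -> forall k, 0 <= pn f k.
Proof.
move=> f_ge0 [|k] //; have [kK|Kk] := ltnP k K; last by rewrite pn_out.
by rewrite (pn_ord f (Ordinal kK)).
Qed.

Lemma pn_noninc (f : 'I_K -> R) : (forall i, 0 <= f i) ->
  (forall i j : 'I_K, (i <= j)%N -> f j <= f i) ->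
  forall j k, (1 <= j <= k)%N -> pn f k <= pn f j.
Proof.
move=> f_ge0 f_noninc [|j] [|k] // jk; rewrite /= ltnS in jk.
have [kK|Kk] := ltnP k K; last by rewrite pn_out ?pn_ge0.
have jK := leq_ltn_trans jk kK.
by rewrite (pn_ord f (Ordinal kK)) (pn_ord f (Ordinal jK)); apply: f_noninc.
Qed.

Lemma sum_ord_succ (F : nat -> R) :
  \sum_(i < K) F i.+1 = \sum_(1 <= k < K.+1) F k.
Proof. by rewrite big_add1 /= big_mkord. Qed.

Lemma simplex_pn (q : 'I_K -> R) : in_simplex q ->
  (forall k, (1 <= k <= K)%N -> 0 <= pn q k <= 1) /\ \sum_(1 <= k < K.+1) pn q k = 1.
Proof.
move=> [q_ge0 q_sum]; split; last first.
  by rewrite -sum_ord_succ -q_sum; apply: eq_bigr => i _; rewrite pn_ord.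
move=> [|k] // /andP[_ kK]; rewrite (pn_ord q (Ordinal kK)) q_ge0 -q_sum /=.
by rewrite (bigD1 (Ordinal kK)) //= lerDl sumr_ge0.
Qed.

Lemma pn1_gt0 (p : 'I_K -> R) : (1 <= K)%N -> in_simplex p ->
  (forall i j : 'I_K, (i <= j)%N -> p j <= p i) -> 0 < pn p 1.
Proof.
move=> K1 [p_ge0 p_sum] p_noninc; rewrite (pn_ord p (Ordinal K1)) lt_def p_ge0 andbT.
apply: contra_eq_neq p_sum => p0_eq0; rewrite big1 1?eq_sym ?oner_eq0 // => i _.
by apply/eqP; rewrite eq_le p_ge0 andbT -p0_eq0 p_noninc.
Qed.

Lemma LN_pn (N : nat) (p q : 'I_K -> R) :
  LN N p q = \sum_(1 <= k < K.+1) pn p k * (1 - pn q k) ^+ N.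
Proof. by rewrite /LN -sum_ord_succ; apply: eq_bigr => i _; rewrite !pn_ord. Qed.

Lemma LN_shift (N : nat) (p : 'I_K -> R) (f : nat -> R) :
  LN N p (fun i => f i.+1) = \sum_(1 <= k < K.+1) pn p k * (1 - f k) ^+ N.
Proof. by rewrite /LN -sum_ord_succ; apply: eq_bigr => i _; rewrite pn_ord. Qed.

End PaddedIndexing.

Lemma KN_spec (R : realType) (K N : nat) (p : 'I_K -> R) : (1 <= K)%N ->
  [/\ (1 <= KN N p <= K)%N, KN_cond N p (KN N p) &
      (KN N p < K)%N -> ~~ KN_cond N p (KN N p).+1].
Proof.
move=> K1; have cond1 : KN_cond N p 1 by rewrite /KN_cond big_geq // ltr01.
have KN_max s : (1 <= s <= K)%N -> KN_cond N p s -> (s <= KN N p)%N.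
  by move=> sK; apply: leq_bigmax_seq; rewrite // mem_index_iota ltnS.
have KN_ge1 : (1 <= KN N p)%N by apply: KN_max; rewrite ?K1.
have : (KN N p == 0%N) || KN_cond N p (KN N p) && (1 <= KN N p <= K)%N.
  rewrite /KN big_seq_cond.
  apply: (big_ind (fun x => (x == 0%N) || KN_cond N p x && (1 <= x <= K)%N)) => [|x y|s].
  - by rewrite eqxx.
  - move=> hx hy; rewrite /maxn; case: ltnP => _ //.
  by rewrite mem_index_iota ltnS => /andP[/andP[-> ->] ->]; rewrite orbT.
case/orP => [/eqP KN0|/andP[condKN KN_range]]; first by rewrite KN0 in KN_ge1.
split => // KN_ltK; apply/negP => /(KN_max (KN N p).+1 KN_ltK).
by rewrite ltnn.
Qed.

Theorem theorem4p2 (R : realType) (K N : nat) (p : 'I_K -> R) :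
  (1 <= K)%N -> (2 <= N)%N ->
  in_simplex p ->
  (forall i j : 'I_K, (i <= j)%N -> p j <= p i) ->
  LN N p p = \sum_(k < K) p k * (1 - p k) ^+ N /\
  exists delta : R,
    pn p (KN N p).+1 <= delta /\ delta < pn p (KN N p) /\
    (exists q0 : 'I_K -> R, in_simplex q0 /\
       LN N p q0 = ((KN N p)%:R - 1) * delta
                   + \sum_((KN N p).+1 <= k < K.+1) pn p k) /\
    (forall q : 'I_K -> R, in_simplex q ->
       ((KN N p)%:R - 1) * delta + \sum_((KN N p).+1 <= k < K.+1) pn p k
       <= LN N p q).
Proof.
move=> K1 N2 p_simplex p_noninc; split => //.
have [p_ge0 _] := p_simplex.
have [/andP[S1 SK] cond_S cond_S1] := KN_spec N p K1.
have [delta [delta_ge [delta_lt [X [X_ge0 X_sum LX LX_min]]]]] :=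
  water_filling N2 S1 SK (pn_ge0 p_ge0) (pn_noninc p_ge0 p_noninc)
    (pn1_gt0 K1 p_simplex p_noninc) (@pn_out _ _ p) cond_S cond_S1.
exists delta; do 2!split => //; split.
  exists (fun i => X i.+1); rewrite LN_shift LX; split => //.
  by split; rewrite // sum_ord_succ.
by move=> q /simplex_pn[q01 q_sum]; rewrite LN_pn -LX; exact: LX_min q01 q_sum.
Qed.
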